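(* Let $p$ and $r$ be states such that $\beta(p)$ tightly thermomajorizes $\beta(r)$. Then there exist a biplanar extremal thermal process $T\in TP(d)$ with $Tp=r$, a $\beta$-order $\lambda$ of $p$ and a $\beta$-order $\mu$ of $r$ such that the drawing of $G(T)$ with left ordering $\lambda$ and right ordering $\mu$ is plain (i.e. one may take $\pi_{in}(T)=\lambda$, $\pi_{out}(T)=\mu$). If moreover the ratios $p_i/g_i$ are pairwise distinct, then $T$ is the only element of $TP(d)$ satisfying $Tp=r$.
   Context: Fix $d\ge 2$, $\beta\in(0,\infty)$ and pairwise distinct reals $E_0=0,E_1,\dots,E_{d-1}$. Put $q_{m,n}=e^{-\beta(E_m-E_n)}$, $Z=\sum_j q_{j,0}$, $g_i=q_{i,0}/Z$. A state is a probability vector in $\mathbb{R}^d$. $TP(d)$ is the set of $d\times d$ real matrices with non-negative entries, columns summing to $1$, and $Tg=g$; an extremal thermal process is an extreme point of the convex set $TP(d)$. $\beta$-order and curve: for a state $p$, a permutation $\pi$ of $\{0,\dots,d-1\}$ with $p_{\pi(0)}/g_{\pi(0)}\ge\dots\ge p_{\pi(d-1)}/g_{\pi(d-1)}$ gives the $\beta$-order $(\pi(0),\dots,\pi(d-1))$; with $x_k=\sum_{i\le k}g_{\pi(i)}$, $y_k=\sum_{i\le k}p_{\pi(i)}$, the thermomajorization curve $\beta(p)$ is the graph of the concave piecewise-linear function on $[0,1]$ through $(0,0),(x_0,y_0),\dots,(x_{d-1},y_{d-1})=(1,1)$; its elbows are $(x_k,y_k)$, $k=0,\dots,d-2$. $\beta(p)$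 tightly thermomajorizes $\beta(r)$ if every elbow of $\beta(r)$ lies on $\beta(p)$. Graphs: for $T\in TP(d)$, $G(T)$ is the bipartite graph with left vertices $L_0,\dots,L_{d-1}$ (columns), right vertices $R_0,\dots,R_{d-1}$ (rows), and an edge $\{L_j,R_i\}$ iff $T_{ij}>0$ (this is the support graph of the transportation matrix $T\,\mathrm{diag}(q_{0,0},\dots,q_{d-1,0})$). Given orderings $\lambda=(\lambda_0,\dots,\lambda_{d-1})$ and $\mu=(\mu_0,\dots,\mu_{d-1})$ (permutations of $\{0,\dots,d-1\}$), place $L_{\lambda_a}$ at height $a$ on one vertical line and $R_{\mu_b}$ at height $b$ on a parallel line and draw edges as straight segments; the drawing is plain if there are no two edges $\{L_{\lambda_a},R_{\mu_b}\}$, $\{L_{\lambda_{a'}},R_{\mu_{b'}}\}$ with $a<a'$ and $b>b'$. An extremal thermal process $T$ is biplanar if some pair $(\lambda,\mu)$ gives a plain drawing; such $\lambda,\mu$ are called orders $\pi_{in}(T),\pi_{out}(T)$ of $T$. *)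

From HB Require Import structures.
From mathcomp Require Import all_boot all_order all_algebra.
From mathcomp Require Import mathcomp_extra reals.
From mathcomp Require Import sequences.
From mathcomp Require Import perm.
Set Implicit Arguments. Unset Strict Implicit. Unset Printing Implicit Defensive.
Import Order.TTheory GRing.Theory Num.Theory.
Local Open Scope ring_scope.

Section ThermoDefs.
Variables (R : realType) (d : nat).

Definition qf (beta : R) (E : 'I_d -> R) (m n : 'I_d) : R :=
  expR (- (beta * (E m - E n))).

(* Gibbs state g_i = q_{i,0} / Z, Z = sum_j q_{j,0}; i0 is the index 0. *)
Definition gibbs (beta : R) (E : 'I_d -> R) (i0 : 'I_d) (i : 'I_d) : R :=
  qf beta E i i0 / \sum_(j < d) qf beta E j i0.

Definition is_state (p : 'I_d -> R) : Prop :=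
  (forall i, 0 <= p i) /\ \sum_(i < d) p i = 1.

Definition mxapp (T : 'M[R]_d) (p : 'I_d -> R) : 'I_d -> R :=
  fun i => \sum_(j < d) T i j * p j.

Definition in_TP (g : 'I_d -> R) (T : 'M[R]_d) : Prop :=
  (forall i j, 0 <= T i j) /\
  (forall j, \sum_(i < d) T i j = 1) /\
  mxapp T g = g.

Definition extremal_TP (g : 'I_d -> R) (T : 'M[R]_d) : Prop :=
  in_TP g T /\
  forall (T1 T2 : 'M[R]_d) (t : R), in_TP g T1 -> in_TP g T2 -> 0 < t -> t < 1 ->
    T = t *: T1 + (1 - t) *: T2 -> T1 = T /\ T2 = T.

Definition beta_order (g p : 'I_d -> R) (pi : {perm 'I_d}) : Prop :=
  forall a b : 'I_d, (a <= b)%N -> p (pi b) / g (pi b) <= p (pi a) / g (pi a).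

Definition psum (pi : {perm 'I_d}) (v : 'I_d -> R) (k : nat) : R :=
  \sum_(i < d | (i < k)%N) v (pi i).

(* (x, y) lies on the thermomajorization curve beta(p): it lies on the
   segment from (x_{k-1}, y_{k-1}) to (x_k, y_k) for some k (with
   (x_{-1}, y_{-1}) = (0,0)), the points being computed along a beta-order
   of p (all beta-orders of p give the same curve). *)
Definition on_curve (g p : 'I_d -> R) (x y : R) : Prop :=
  exists pi : {perm 'I_d}, beta_order g p pi /\
  exists k : 'I_d,
    psum pi g k <= x /\ x <= psum pi g k.+1 /\
    y = psum pi p k + (p (pi k) / g (pi k)) * (x - psum pi g k).

(* beta(p) tightly thermomajorizes beta(r): every elbow (x_k, y_k),
   k = 0..d-2, of beta(r) (for a beta-order of r) lies on beta(p). *)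
Definition tightly_thermomajorizes (g p r : 'I_d -> R) : Prop :=
  exists mu : {perm 'I_d}, beta_order g r mu /\
  forall k : nat, (k.+1 < d)%N ->
    on_curve g p (psum mu g k.+1) (psum mu r k.+1).

(* plain drawing of G(T) with left ordering lam and right ordering mu:
   L_{lam a} at height a, R_{mu b} at height b, edge {L_j,R_i} iff T i j > 0. *)
Definition plain_drawing (T : 'M[R]_d) (lam mu : {perm 'I_d}) : Prop :=
  forall a a' b b' : 'I_d, (a < a')%N -> (b' < b)%N ->
    0 < T (mu b) (lam a) -> 0 < T (mu b') (lam a') -> False.

Definition biplanar (g : 'I_d -> R) (T : 'M[R]_d) : Prop :=
  extremal_TP g T /\ exists lam mu : {perm 'I_d}, plain_drawing T lam mu.

End ThermoDefs.

(* Lay out the Gibbs weights g along [0, 1] twice, as consecutive cells: in a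
   beta-order lam of p on the left and in a beta-order mu of r on the right.
   Let T move from column lam a to row mu b the fraction of left cell a that
   overlaps right cell b.  T is stochastic and fixes g, and two chains of
   consecutive intervals overlap in a staircase pattern, so its drawing is
   plain.  The mass T p puts into the first n right cells is the height of the
   thermomajorization curve of p at x_n, which by tightness is y_n; hence
   T p = r.  Conversely the curve solves a fractional knapsack problem: taking
   a fraction w_i in [0, 1] of each cell i with total weight x collects at
   most the curve height at x, and when the ratios p_i / g_i are distinct only
   the greedy choice attains it.  This fixes the cumulative column sums of any
   T' in TP(d) with T' p = r, hence T' = T; a T' supported inside the support
   of T is forced to be greedy as well, which gives extremality. *)

From HB Require Import structures.
From mathcomp Require Import all_boot all_order all_algebra.
From mathcomp Require Import mathcomp_extra reals.
From mathcomp Require Import sequences.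
From mathcomp Require Import perm.
From mathcomp Require Import lra.
From mathcomp Require exp.
From Stdlib Require Import FunctionalExtensionality.
Import Order.TTheory GRing.Theory Num.Theory.
Local Open Scope ring_scope.
Set Implicit Arguments. Unset Strict Implicit. Unset Printing Implicit Defensive.

Section Overlap.
Variable R : realFieldType.

Definition overlap (s t u v : R) : R := Num.max 0 (Num.min t v - Num.max s u).

Local Ltac no_minmax x := lazymatch x with
  | context [Order.max _ _] => fail | context [Order.min _ _] => fail | _ => idtac end.

(* Case on the innermost [min]/[max] first, so that every branch is linear. *)
Local Ltac case_minmax := rewrite /overlap; repeat match goal with
  | |- context [Order.max ?x ?y] => no_minmax x; no_minmax y; case: (leP x y) => ?
  | |- context [Order.min ?x ?y] => no_minmax x; no_minmax y; case: (leP x y) => ?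
  end.

Lemma overlap_ge0 s t u v : 0 <= overlap s t u v.
Proof. case_minmax; lra. Qed.

Lemma overlapC s t u v : overlap s t u v = overlap u v s t.
Proof. by rewrite /overlap (minC t v) (maxC s u). Qed.

Lemma overlap_le s t u v : s <= t -> overlap s t u v <= t - s.
Proof. move=> ?; case_minmax; lra. Qed.

Lemma overlap_point s t u : overlap s t u u = 0.
Proof. case_minmax; lra. Qed.

Lemma overlap_eq0l s t u v : t <= u -> overlap s t u v = 0.
Proof. move=> ?; case_minmax; lra. Qed.

Lemma overlap_eq0r s t u v : v <= s -> overlap s t u v = 0.
Proof. move=> ?; case_minmax; lra. Qed.

Lemma overlap_inner s t u v : u <= s -> s <= t -> t <= v -> overlap s t u v = t - s.
Proof. move=> ? ? ?; case_minmax; lra. Qed.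

Lemma overlap_cut s t u v : u <= s -> s <= v -> v <= t -> overlap s t u v = v - s.
Proof. move=> ? ? ?; case_minmax; lra. Qed.

Lemma overlap_split s t u m v : u <= m -> m <= v ->
  overlap s t u m + overlap s t m v = overlap s t u v.
Proof. move=> ? ?; case_minmax; lra. Qed.

Lemma overlap_gt0 s t u v : 0 < overlap s t u v -> u < t /\ s < v.
Proof. case_minmax; lra. Qed.

End Overlap.

Section Sums.
Variable R : realFieldType.

Lemma eq_sum_but1 (I : finType) (F G : I -> R) (k : I) :
  \sum_i F i = \sum_i G i -> (forall i, i != k -> F i = G i) -> F =1 G.
Proof.
move=> eq_sum eq_but i; have [->|] := eqVneq i k; last exact: eq_but.
move: eq_sum; rewrite (bigD1 k) // [RHS](bigD1 k) //= (eq_bigr _ (fun i ik => eq_but i ik)).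
exact: addIr.
Qed.

Lemma sum_cond_le (I : finType) (F : I -> R) (P : pred I) :
  (forall i, 0 <= F i) -> \sum_(i | P i) F i <= \sum_i F i.
Proof. by move=> F_ge0; rewrite big_mkcond /=; apply: ler_sum => i _; case: (P i). Qed.

Variable d : nat.

Lemma sum_ord_prefixS (F : 'I_d -> R) n (ltnd : (n < d)%N) :
  \sum_(i < d | (i < n.+1)%N) F i = \sum_(i < d | (i < n)%N) F i + F (Ordinal ltnd).
Proof.
rewrite (bigD1 (Ordinal ltnd)) //= addrC; congr (_ + _).
by apply: eq_bigl => i; rewrite ltnS leq_eqVlt -val_eqE /=; case: (ltngtP i n).
Qed.

Lemma overlap_telescope (C : nat -> R) s t n :
  {homo C : m k / (m <= k)%N >-> m <= k} -> (n <= d)%N ->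
  \sum_(b < d | (b < n)%N) overlap s t (C b) (C b.+1) = overlap s t (C 0%N) (C n).
Proof.
move=> C_nondecr; elim: n => [_|n IH ltnd].
  by rewrite big_pred0 ?overlap_point // => i; rewrite ltn0.
rewrite (sum_ord_prefixS (fun b : 'I_d => overlap s t (C b) (C b.+1)) ltnd) /=.
rewrite IH ?(ltnW ltnd) //; apply: overlap_split; exact: C_nondecr.
Qed.

End Sums.

Section PrefixSums.
Variables (R : realType) (d : nat).
Implicit Types (s : {perm 'I_d}) (v w : 'I_d -> R).

Lemma psum0 s v : psum s v 0 = 0.
Proof. by rewrite /psum big_pred0 // => i; rewrite ltn0. Qed.

Lemma psumS s v (a : 'I_d) : psum s v a.+1 = psum s v a + v (s a).
Proof.
rewrite /psum (sum_ord_prefixS (fun i => v (s i)) (ltn_ord a)).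
by congr (_ + v (s _)); apply: val_inj.
Qed.

Lemma psum_total s v : psum s v d = \sum_i v i.
Proof.
rewrite /psum (eq_bigl xpredT) => [|i]; last exact: ltn_ord.
by rewrite [RHS](reindex_inj (@perm_inj _ s)).
Qed.

Lemma psum_inj s v w : (forall n, (n <= d)%N -> psum s v n = psum s w n) -> v =1 w.
Proof.
move=> eq_psum i; rewrite -(permKV s i); set b := (s^-1)%g i.
have := eq_psum b.+1 (ltn_ord b); rewrite !psumS eq_psum ?(ltnW (ltn_ord b)) //.
exact: addrI.
Qed.

Lemma psum_mxapp s (T : 'M[R]_d) v n :
  psum s (mxapp T v) n = \sum_j v j * psum s (T^~ j) n.
Proof.
rewrite /psum /mxapp; under [RHS]eq_bigr do rewrite mulr_sumr.
rewrite [RHS]exchange_big; apply: eq_bigr => i _; apply: eq_bigr => j _; exact: mulrC.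
Qed.

End PrefixSums.

Section Curve.
Variables (R : realType) (d : nat) (g p : 'I_d -> R).
Hypotheses (g_gt0 : forall i, 0 < g i) (g_sum1 : \sum_i g i = 1).
Implicit Types (s : {perm 'I_d}) (x : R) (w : 'I_d -> R).

Lemma g_neq0 i : g i != 0. Proof. by rewrite gt_eqF. Qed.

Lemma dim_gt0 : (0 < d)%N.
Proof.
case: (posnP d) => // d0; move/eqP: g_sum1; rewrite big_pred0 ?(eq_sym 0) ?oner_eq0 //.
by move=> i; move: (ltn_ord i); rewrite [in X in (_ < X)%N]d0.
Qed.

Lemma psum_nondecr s : {homo psum s g : m n / (m <= n)%N >-> m <= n}.
Proof.
move=> m n mn; rewrite /psum [leLHS]big_mkcond [leRHS]big_mkcond /=.
apply: ler_sum => i _; case: ifP => [im|_]; first by rewrite (leq_trans im mn).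
by case: ifP => // _; exact: ltW.
Qed.

Lemma psum_ge0 s n : 0 <= psum s g n.
Proof. by rewrite -(psum0 s g) psum_nondecr. Qed.

Lemma psum_le1 s n : psum s g n <= 1.
Proof.
rewrite -g_sum1 [leRHS](reindex_inj (@perm_inj _ s)).
by apply: sum_cond_le => i; exact: ltW.
Qed.

(* [curve s] is the thermomajorization curve of [p], as a function on [0, 1],
   computed along the order [s]. *)
Definition slope s (a : 'I_d) : R := p (s a) / g (s a).
Definition fill s (a : 'I_d) x : R := overlap (psum s g a) (psum s g a.+1) 0 x.
Definition curve s x : R := \sum_a slope s a * fill s a x.

Lemma fill_full s x (a k : 'I_d) : (a < k)%N -> psum s g k <= x -> fill s a x = g (s a).
Proof.
move=> ak kx; rewrite /fill overlap_inner ?psum_ge0 ?psum_nondecr //.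
  by rewrite psumS addrC addKr.
exact: le_trans (psum_nondecr s ak) kx.
Qed.

Lemma fill_empty s x (a k : 'I_d) : (k < a)%N -> x <= psum s g k.+1 -> fill s a x = 0.
Proof. by move=> ka xk; rewrite /fill overlap_eq0r // (le_trans xk) ?psum_nondecr. Qed.

Lemma fill1 s a : fill s a 1 = g (s a).
Proof.
by rewrite /fill overlap_inner ?psum_ge0 ?psum_nondecr ?psum_le1 // psumS addrC addKr.
Qed.

Lemma fill_le s a x : fill s a x <= g (s a).
Proof.
rewrite /fill -[in leRHS](addKr (psum s g a) (g (s a))) addrC -psumS.
by rewrite overlap_le ?psum_nondecr.
Qed.

Lemma sum_fill s x : 0 <= x -> x <= 1 -> \sum_a fill s a x = x.
Proof.
move=> x_ge0 x_le1.
rewrite (eq_bigl (fun a : 'I_d => (a < d)%N)) => [|a]; last by rewrite ltn_ord.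
rewrite /fill; under eq_bigr do rewrite overlapC.
rewrite (overlap_telescope (C := psum s g)) //; last exact: psum_nondecr.
by rewrite psum0 psum_total g_sum1 overlap_inner // subr0.
Qed.

Lemma exists_cell s x : 0 <= x -> x <= 1 ->
  exists k : 'I_d, psum s g k <= x <= psum s g k.+1.
Proof.
move=> x_ge0 x_le1.
have exP : exists n, (n < d)%N && (x <= psum s g n.+1).
  by exists d.-1; rewrite ltn_predL dim_gt0 prednK ?dim_gt0 // psum_total g_sum1.
case: (ex_minnP exP) => k /andP[kd xk] kmin; exists (Ordinal kd); rewrite /= xk andbT.
case: k kd xk kmin => [|k] kd xk kmin; first by rewrite psum0.
rewrite leNgt; apply/negP => xk'.
suff /kmin : (k < d)%N && (x <= psum s g k.+1) by rewrite ltnn.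
by rewrite (ltnW kd) ltW.
Qed.

Lemma curve_gap s x w (k : 'I_d) : \sum_j g j * w j = x -> 0 <= x -> x <= 1 ->
  curve s x - \sum_j p j * w j =
  \sum_a (slope s a - slope s k) * (fill s a x - g (s a) * w (s a)).
Proof.
move=> mass x_ge0 x_le1.
have dev0 : \sum_a (fill s a x - g (s a) * w (s a)) = 0.
  by rewrite sumrB sum_fill // -{1}mass (reindex_inj (@perm_inj _ s)) subrr.
under [RHS]eq_bigr do rewrite mulrBl.
rewrite sumrB -mulr_sumr dev0 mulr0 subr0 [X in _ - X](reindex_inj (@perm_inj _ s)).
rewrite -sumrB; apply: eq_bigr => a _.
by rewrite mulrBr /slope mulrA mulfVK ?g_neq0.
Qed.

Lemma curve_gap_ge0 s x w (k a : 'I_d) :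
  beta_order g p s -> (forall j, 0 <= w j <= 1) -> psum s g k <= x -> x <= psum s g k.+1 ->
  0 <= (slope s a - slope s k) * (fill s a x - g (s a) * w (s a)).
Proof.
move=> s_ord w01 kx xk; have /andP[w_ge0 w_le1] := w01 (s a).
case: (ltngtP a k) => [ak|ka|/val_inj ->]; last by rewrite subrr mul0r.
- rewrite (fill_full ak kx) -{1}[g (s a)]mulr1 -mulrBr.
  apply: mulr_ge0; first by rewrite subr_ge0; apply: s_ord; exact: ltnW.
  by rewrite mulr_ge0 ?subr_ge0 // ltW.
- rewrite (fill_empty ka xk) sub0r; apply: mulr_le0.
    by rewrite subr_le0; apply: s_ord; exact: ltnW.
  by rewrite oppr_le0 mulr_ge0 // ltW.
Qed.

Lemma curve_max s x w : beta_order g p s -> (forall j, 0 <= w j <= 1) ->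
  \sum_j g j * w j = x -> 0 <= x -> x <= 1 -> \sum_j p j * w j <= curve s x.
Proof.
move=> s_ord w01 mass x_ge0 x_le1; have [k /andP[kx xk]] := exists_cell s x_ge0 x_le1.
rewrite -subr_ge0 (curve_gap s k mass) //.
by apply: sumr_ge0 => a _; exact: curve_gap_ge0.
Qed.

Lemma curve_max_eq s x w : beta_order g p s -> injective (slope s) ->
  (forall j, 0 <= w j <= 1) -> \sum_j g j * w j = x -> 0 <= x -> x <= 1 ->
  \sum_j p j * w j = curve s x -> forall a, g (s a) * w (s a) = fill s a x.
Proof.
move=> s_ord slope_inj w01 mass x_ge0 x_le1 opt.
have [k /andP[kx xk]] := exists_cell s x_ge0 x_le1.
have gap0 : \sum_a (slope s a - slope s k) * (fill s a x - g (s a) * w (s a)) = 0.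
  by rewrite -(curve_gap s k mass) // opt subrr.
have terms0 := psumr_eq0P (fun a _ => curve_gap_ge0 a s_ord w01 kx xk) gap0.
apply: (eq_sum_but1 (k := k)) => [|a ak].
  by rewrite sum_fill // -mass [RHS](reindex_inj (@perm_inj _ s)).
move/eqP: (terms0 a isT); rewrite mulf_eq0 subr_eq0 (inj_eq slope_inj) (negbTE ak) /=.
by rewrite subr_eq0 => /eqP ->.
Qed.

Definition greedy s x j : R := fill s (s^-1 j)%g x / g j.

Lemma greedy_bounds s x j : 0 <= greedy s x j <= 1.
Proof.
rewrite /greedy divr_ge0 ?overlap_ge0 ?(ltW (g_gt0 _)) //= ler_pdivrMr // mul1r.
by rewrite -{2}(permKV s j) fill_le.
Qed.

Lemma greedy_mass s x : 0 <= x -> x <= 1 -> \sum_j g j * greedy s x j = x.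
Proof.
move=> x_ge0 x_le1; rewrite (reindex_inj (@perm_inj _ s)) -[RHS](sum_fill s x_ge0 x_le1).
by apply: eq_bigr => a _; rewrite /greedy permK mulrC mulfVK ?g_neq0.
Qed.

Lemma greedy_value s x : \sum_j p j * greedy s x j = curve s x.
Proof.
rewrite (reindex_inj (@perm_inj _ s)); apply: eq_bigr => a _.
by rewrite /greedy /slope permK mulrA mulrAC.
Qed.

Lemma curve_beta_order_eq s t x : beta_order g p s -> beta_order g p t ->
  0 <= x -> x <= 1 -> curve s x = curve t x.
Proof.
move=> s_ord t_ord x_ge0 x_le1.
have le_curve s' t' : beta_order g p t' -> curve s' x <= curve t' x.
  move=> t'_ord; rewrite -greedy_value; apply: curve_max => //.
    exact: greedy_bounds.
  exact: greedy_mass.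
by apply/eqP; rewrite eq_le !le_curve.
Qed.

Lemma curve_segment s x (k : 'I_d) : psum s g k <= x -> x <= psum s g k.+1 ->
  curve s x = psum s p k + slope s k * (x - psum s g k).
Proof.
move=> kx xk; have fill_k : fill s k x = x - psum s g k.
  by rewrite /fill overlap_cut ?psum_ge0.
rewrite /curve (bigD1 k) //= fill_k addrC; congr (_ + _).
rewrite /psum big_mkcond [RHS]big_mkcond /=; apply: eq_bigr => a _.
case: (ltngtP a k) => [ak|ka|/val_inj ->]; last by rewrite eqxx.
- rewrite (fill_full ak kx) /slope mulfVK ?g_neq0 //.
  by rewrite -val_eqE /= ltn_eqF.
- by rewrite (fill_empty ka xk) mulr0 -val_eqE /= gtn_eqF.
Qed.

Lemma curve1 s : curve s 1 = \sum_i p i.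
Proof.
rewrite [RHS](reindex_inj (@perm_inj _ s)); apply: eq_bigr => a _.
by rewrite fill1 /slope mulfVK ?g_neq0.
Qed.

Lemma on_curve_curve s x y : beta_order g p s -> on_curve g p x y -> y = curve s x.
Proof.
move=> s_ord [t [t_ord [k [kx [xk ->]]]]].
rewrite (curve_beta_order_eq s_ord t_ord) ?(curve_segment kx xk) //.
  exact: le_trans (psum_ge0 t k) kx.
exact: le_trans xk (psum_le1 t k.+1).
Qed.

Lemma tight_psum_curve (r : 'I_d -> R) (lam mu : {perm 'I_d}) :
  beta_order g p lam -> \sum_i p i = 1 -> \sum_i r i = 1 ->
  (forall k, (k.+1 < d)%N -> on_curve g p (psum mu g k.+1) (psum mu r k.+1)) ->
  forall n, (n <= d)%N -> psum mu r n = curve lam (psum mu g n).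
Proof.
move=> lam_ord p_sum1 r_sum1 elbows [_|n nd].
  by rewrite !psum0 /curve big1 // => a _; rewrite /fill overlap_point mulr0.
case: (ltnP n.+1 d) => [/elbows/(on_curve_curve lam_ord) //|dn].
have -> : n.+1 = d by apply/eqP; rewrite eqn_leq nd dn.
by rewrite !psum_total g_sum1 r_sum1 curve1 p_sum1.
Qed.

Lemma TP_col_psum (T : 'M[R]_d) s n : in_TP g T ->
  (forall j, 0 <= psum s (T^~ j) n <= 1) /\
  \sum_j g j * psum s (T^~ j) n = psum s g n.
Proof.
case=> T_ge0 [T_col Tg]; split; last by rewrite -psum_mxapp Tg.
move=> j; rewrite sumr_ge0 //=; apply: le_trans (sum_cond_le _ _) _ => //.
by rewrite -(T_col j) [leRHS](reindex_inj (@perm_inj _ s)).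
Qed.

End Curve.

Section Transport.
Variables (R : realType) (d : nat) (g p : 'I_d -> R).
Hypotheses (g_gt0 : forall i, 0 < g i) (g_sum1 : \sum_i g i = 1).
Variables (lam mu : {perm 'I_d}).

Definition cell_overlap (b a : 'I_d) : R :=
  overlap (psum lam g a) (psum lam g a.+1) (psum mu g b) (psum mu g b.+1).

Definition transport_mx : 'M[R]_d :=
  \matrix_(i, j) (cell_overlap (mu^-1 i)%g (lam^-1 j)%g / g j).

Lemma transport_mxE (b a : 'I_d) :
  transport_mx (mu b) (lam a) = cell_overlap b a / g (lam a).
Proof. by rewrite mxE !permK. Qed.

Lemma transport_mx_eq0 (b a : 'I_d) :
  (psum lam g a.+1 <= psum mu g b) || (psum mu g b.+1 <= psum lam g a) ->
  transport_mx (mu b) (lam a) = 0.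
Proof.
rewrite transport_mxE /cell_overlap => /orP[/overlap_eq0l|/overlap_eq0r] ->; exact: mul0r.
Qed.

Lemma transport_mx_col_psum a n : (n <= d)%N ->
  g (lam a) * psum mu (transport_mx^~ (lam a)) n = fill g lam a (psum mu g n).
Proof.
move=> nd; rewrite /psum mulr_sumr.
under eq_bigr do rewrite transport_mxE mulrC (mulfVK (g_neq0 g_gt0 _)).
by rewrite (overlap_telescope (C := psum mu g)) ?psum0 //; exact: psum_nondecr.
Qed.

Lemma sum_cell_overlap_row b : \sum_a cell_overlap b a = g (mu b).
Proof.
rewrite (eq_bigl (fun a : 'I_d => (a < d)%N)) => [|a]; last by rewrite ltn_ord.
rewrite /cell_overlap; under eq_bigr do rewrite overlapC.
rewrite (overlap_telescope (C := psum lam g)) //; last exact: psum_nondecr.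
rewrite psum0 psum_total g_sum1; exact: fill1.
Qed.

Lemma transport_mx_TP : in_TP g transport_mx.
Proof.
split; [|split].
- by move=> i j; rewrite mxE divr_ge0 ?overlap_ge0 // ltW.
- move=> j; rewrite -(permKV lam j); apply: (mulfI (g_neq0 g_gt0 (lam (lam^-1 j)%g))).
  rewrite mulr1 -(psum_total mu) transport_mx_col_psum // psum_total g_sum1.
  exact: fill1.
- apply: functional_extensionality => i; rewrite /mxapp -(permKV mu i).
  rewrite (reindex_inj (@perm_inj _ lam)) /=.
  under eq_bigr do rewrite transport_mxE (mulfVK (g_neq0 g_gt0 _)).
  exact: sum_cell_overlap_row.
Qed.

Lemma transport_mx_psum_apply n : (n <= d)%N ->
  psum mu (mxapp transport_mx p) n = curve g p lam (psum mu g n).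
Proof.
move=> nd; rewrite psum_mxapp (reindex_inj (@perm_inj _ lam)) /curve.
apply: eq_bigr => a _; rewrite -transport_mx_col_psum // /slope.
by rewrite mulrA mulfVK ?(g_neq0 g_gt0).
Qed.

Lemma transport_mx_apply (r : 'I_d -> R) :
  (forall n, (n <= d)%N -> psum mu r n = curve g p lam (psum mu g n)) ->
  mxapp transport_mx p = r.
Proof.
move=> r_curve; apply: functional_extensionality; apply: (psum_inj (s := mu)) => n nd.
by rewrite transport_mx_psum_apply // r_curve.
Qed.

Lemma eq_transport_mx (T : 'M[R]_d) :
  (forall n a, (n <= d)%N ->
     g (lam a) * psum mu (T^~ (lam a)) n = fill g lam a (psum mu g n)) ->
  T = transport_mx.
Proof.
move=> T_col; apply/matrixP => i j; rewrite -(permKV lam j); set a := (lam^-1 j)%g.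
suff /(_ i) : T^~ (lam a) =1 transport_mx^~ (lam a) by [].
apply: (psum_inj (s := mu)) => n nd; apply: (mulfI (g_neq0 g_gt0 (lam a))).
by rewrite T_col // transport_mx_col_psum.
Qed.

Lemma transport_mx_support (T : 'M[R]_d) : in_TP g T ->
  (forall i j, transport_mx i j = 0 -> T i j = 0) -> T = transport_mx.
Proof.
move=> T_TP T_supp; apply: eq_transport_mx => n a nd.
have [w01 mass] := TP_col_psum mu n T_TP; set x := psum mu g n in mass *.
have /andP[x_ge0 x_le1] : 0 <= x <= 1 by rewrite /x (psum_ge0 g_gt0) (psum_le1 g_gt0 g_sum1).
have [k /andP[kx xk]] := exists_cell g_sum1 lam x_ge0 x_le1.
pose w j := psum mu (T^~ j) n.
apply: (eq_sum_but1 (F := fun a => g (lam a) * w (lam a))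
                    (G := fun a => fill g lam a x) (k := k)) => [|a' a'k].
  by rewrite sum_fill // -mass [RHS](reindex_inj (@perm_inj _ lam)).
case: (ltngtP a' k) => [a'_lt|a'_gt|/val_inj a'_eq]; last by rewrite a'_eq eqxx in a'k.
- rewrite (fill_full g_gt0 a'_lt kx) -[RHS]mulr1; congr (_ * _).
  case: T_TP => _ [/(_ (lam a')) <- _].
  rewrite /w /psum [RHS](reindex_inj (@perm_inj _ mu)).
  rewrite [RHS](bigID (fun b : 'I_d => (b < n)%N)) /= [X in _ = _ + X]big1 ?addr0 //.
  move=> b; rewrite -leqNgt => nb; apply/T_supp/transport_mx_eq0.
  rewrite (le_trans (psum_nondecr g_gt0 lam a'_lt)) //.
  by rewrite (le_trans kx) ?psum_nondecr.
- rewrite (fill_empty g_gt0 a'_gt xk) /w /psum big1 ?mulr0 // => b bn.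
  apply/T_supp/transport_mx_eq0; rewrite (le_trans (psum_nondecr g_gt0 mu bn)) ?orbT //.
  by rewrite (le_trans xk) ?psum_nondecr.
Qed.

Lemma transport_mx_unique (T : 'M[R]_d) (r : 'I_d -> R) :
  beta_order g p lam -> injective (fun i => p i / g i) ->
  (forall n, (n <= d)%N -> psum mu r n = curve g p lam (psum mu g n)) ->
  in_TP g T -> mxapp T p = r -> T = transport_mx.
Proof.
move=> lam_ord ratio_inj r_curve T_TP Tp; apply: eq_transport_mx => n a nd.
have [w01 mass] := TP_col_psum mu n T_TP.
apply: (curve_max_eq g_gt0 g_sum1 lam_ord _ w01 mass); rewrite ?psum_ge0 ?psum_le1 //.
  by move=> a1 a2 eq_slope; apply: (@perm_inj _ lam); exact: ratio_inj.
by rewrite -psum_mxapp Tp r_curve.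
Qed.

Lemma transport_mx_plain : plain_drawing transport_mx lam mu.
Proof.
move=> a a' b b' aa' b'b T_ba T_b'a'.
rewrite transport_mxE pmulr_lgt0 ?invr_gt0 // in T_ba.
rewrite transport_mxE pmulr_lgt0 ?invr_gt0 // in T_b'a'.
have [? ?] := overlap_gt0 T_ba; have [? ?] := overlap_gt0 T_b'a'.
have := psum_nondecr g_gt0 lam aa'; have := psum_nondecr g_gt0 mu b'b.
lra.
Qed.

Lemma transport_mx_extremal : extremal_TP g transport_mx.
Proof.
split=> [|T1 T2 t T1_TP T2_TP t_gt0 t_lt1 decomp]; first exact: transport_mx_TP.
have zero_entries i j : transport_mx i j = 0 -> T1 i j = 0 /\ T2 i j = 0.
  move=> Tij0; have := congr1 (fun M : 'M[R]_d => M i j) decomp.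
  rewrite /= Tij0 !mxE => /esym/eqP.
  rewrite paddr_eq0 ?mulr_ge0 ?T1_TP.1 ?T2_TP.1 ?subr_ge0 ?(ltW t_gt0) ?(ltW t_lt1) //.
  rewrite !mulf_eq0 (gt_eqF t_gt0) subr_eq0 (gt_eqF t_lt1) /=.
  by case/andP => /eqP ? /eqP.
by split; apply: transport_mx_support => // i j /zero_entries[].
Qed.

End Transport.

Section Gibbs.
Variables (R : realType) (d : nat) (beta : R) (E : 'I_d -> R) (i0 : 'I_d).

Lemma qf_gt0 m n : 0 < qf beta E m n.
Proof. exact: exp.expR_gt0. Qed.

Lemma partition_gt0 : 0 < \sum_j qf beta E j i0.
Proof.
apply: (lt_le_trans (qf_gt0 i0 i0)); rewrite (bigD1 i0) //= lerDl.
by apply: sumr_ge0 => j _; exact/ltW/qf_gt0.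
Qed.

Lemma gibbs_gt0 i : 0 < gibbs beta E i0 i.
Proof. by rewrite /gibbs divr_gt0 ?qf_gt0 ?partition_gt0. Qed.

Lemma gibbs_sum1 : \sum_i gibbs beta E i0 i = 1.
Proof. by rewrite /gibbs -mulr_suml divff // gt_eqF ?partition_gt0. Qed.

End Gibbs.

Theorem mainTheorem8 (R : realType) (d : nat) (hd : (2 <= d)%N)
  (beta : R) (hbeta : 0 < beta) (E : 'I_d -> R) (i0 : 'I_d)
  (hi0 : nat_of_ord i0 = 0%N) (hE0 : E i0 = 0) (hEinj : injective E)
  (p r : 'I_d -> R) (hp : is_state p) (hr : is_state r)
  (htight : tightly_thermomajorizes (gibbs beta E i0) p r) :
  exists T : 'M[R]_d,
    extremal_TP (gibbs beta E i0) T /\ biplanar (gibbs beta E i0) T /\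
    mxapp T p = r /\
    (exists lam mu : {perm 'I_d},
       beta_order (gibbs beta E i0) p lam /\
       beta_order (gibbs beta E i0) r mu /\ plain_drawing T lam mu) /\
    ((forall i j : 'I_d, i != j ->
        p i / gibbs beta E i0 i != p j / gibbs beta E i0 j) ->
     forall T' : 'M[R]_d, in_TP (gibbs beta E i0) T' -> mxapp T' p = r ->
       T' = T).
Proof.
have g_gt0 := gibbs_gt0 beta E i0; have g_sum1 := gibbs_sum1 beta E i0.
case: htight => mu [mu_ord elbows].
(* The definition of [on_curve] supplies a beta-order of [p] with each elbow. *)
have [lam [lam_ord _]] := elbows 0%N hd.
have r_curve := tight_psum_curve g_gt0 g_sum1 lam_ord hp.2 hr.2 elbows.
have plain := @transport_mx_plain _ _ _ g_gt0 lam mu.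
have extremal := @transport_mx_extremal _ _ _ g_gt0 g_sum1 lam mu.
exists (transport_mx (gibbs beta E i0) lam mu).
split=> //; split; first by split=> //; exists lam, mu.
split; first exact: transport_mx_apply.
split; first by exists lam, mu.
move=> ratio_neq T' T'_TP T'p.
apply: (transport_mx_unique g_gt0 g_sum1 lam_ord _ r_curve T'_TP T'p).
by move=> i j /eqP; apply: contraTeq; exact: ratio_neq.
Qed.
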